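(* Let $X=\{a_1,\dots,a_\ell\}$ be a finite set of $\ell$ distinct points and $N\ge2$. For every $\gamma\in\mathcal{P}_{sym}(X^N)$ there exists a probability measure $\alpha$ on the finite set $\mathcal{P}_{\frac1N}(X)$ such that $$\gamma=\int_{\mathcal{P}_{\frac1N}(X)}\psi_N(\lambda)\,d\alpha(\lambda),$$ and for every $\mu\in\mathcal{P}_{N\text{-}rep}(X^2)$ there exists a probability measure $\alpha$ on $\mathcal{P}_{\frac1N}(X)$ such that $$\mu=\int_{\mathcal{P}_{\frac1N}(X)}\Big(\lambda\otimes\lambda+\frac1{N-1}\big(\lambda\otimes\lambda-\sum_{i=1}^\ell\lambda_i\delta_i\otimes\delta_i\big)\Big)\,d\alpha(\lambda).$$
   Context: $\mathcal{P}(X)$ denotes probability measures on $X$, identified with vectors $(\lambda_i)$, $\lambda_i=\lambda(\{a_i\})$; $\delta_i$ is the Dirac measure at $a_i$; $\mathcal{P}_{\frac1N}(X)=\{\lambda\in\mathcal{P}(X):\lambda_i\in\frac1N\mathbb{Z}\ \forall i\}$. The symmetrization operator is $(S\gamma)(A_1\times\cdots\times A_N)=\frac1{N!}\sum_{\sigma\in S_N}\gamma(A_{\sigma(1)}\times\cdots\times A_{\sigma(N)})$; $\mathcal{P}_{sym}(X^N)$ is the set of probability measures $\gamma$ on $X^N$ with $S\gamma=\gamma$. A probability measure $\mu$ on $X^2$ is $N$-representable if $\mu(A)=\gamma(A\times X^{N-2})$ for all $A\subseteq X^2$ for some $\gamma\in\mathcal{P}_{sym}(X^N)$; $\mathcal{P}_{N\text{-}rep}(X^2)$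 is the set of these. For $\lambda\in\mathcal{P}_{\frac1N}(X)$, $\psi_N(\lambda)=S(\delta_{a_{i_1}}\otimes\cdots\otimes\delta_{a_{i_N}})$ where $i_1\le\dots\le i_N$ is the nondecreasing index sequence in which each $i$ appears exactly $N\lambda_i$ times (equivalently, $\psi_N(\lambda)$ is the unique extreme point of $\mathcal{P}_{sym}(X^N)$ with one-point marginal $\lambda$). *)

(* X = {a_1,...,a_l} is modelled by the finite type 'I_l
   (points are distinct by construction). A (probability) measure on a
   finite set is given by its point masses. *)
From HB Require Import structures.
From mathcomp Require Import all_boot all_order all_algebra all_fingroup.
From mathcomp Require Import reals.
Set Implicit Arguments. Unset Strict Implicit. Unset Printing Implicit Defensive.
Import Order.TTheory GRing.Theory Num.Theory.
Local Open Scope ring_scope.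

Section Defs.
Variable R : realType.

Definition is_prob (T : finType) (p : T -> R) : Prop :=
  (forall t, 0 <= p t) /\ \sum_t p t = 1.

Definition pt (N l : nat) := {ffun 'I_N -> 'I_l}.

Definition symz (N l : nat) (g : pt N l -> R) : pt N l -> R :=
  fun x => (N`!%:R)^-1 * \sum_(s : 'S_N) g [ffun j => x (s j)].

Definition Psym (N l : nat) (g : pt N l -> R) : Prop :=
  is_prob g /\ forall x, symz g x = g x.

(* two-point marginal mu(A) = g(A x X^{N-2}), on points of X^2 *)
Definition marg2 (N l : nat) (g : pt N l -> R) (i j : 'I_l) : R :=
  \sum_(x : pt N l | [forall k : 'I_N,
          ((val k == 0%N) ==> (x k == i)) && ((val k == 1%N) ==> (x k == j))])
     g x.

Definition Nrep (N l : nat) (mu : 'I_l * 'I_l -> R) : Prop :=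
  is_prob mu /\
  exists g : pt N l -> R, Psym g /\ forall i j, mu (i, j) = marg2 g i j.

(* P_{1/N}(X): lambda with lambda_i = k_i / N, k_i natural, sum k_i = N.
   Elements are represented by their count vectors k (a bijective encoding). *)
Definition lamIdx (N l : nat) :=
  {k : {ffun 'I_l -> 'I_N.+1} | (\sum_i (k i : nat))%N == N}.

Definition lam (N l : nat) (k : lamIdx N l) (i : 'I_l) : R :=
  ((val k i : nat)%:R) / N%:R.

Definition idxseq (N l : nat) (k : lamIdx N l) : seq nat :=
  flatten [seq nseq (val k i : nat) (i : nat) | i <- enum 'I_l].

Definition diracN (N l : nat) (s : seq nat) (x : pt N l) : R :=
  if [forall j : 'I_N, (x j : nat) == nth 0%N s j] then 1 else 0.

Definition psiN (N l : nat) (k : lamIdx N l) : pt N l -> R :=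
  symz (diracN (idxseq k)).

End Defs.

(* A symmetric g is the mixture of the psi_N(lambda) weighted by the g-mass of
   the configurations of type lambda: psi_N(type y)(x) is the fraction of
   permutations s with x o s = y, so averaging g over types gives back the
   symmetrization of g, i.e. g itself.  For the two-point marginal, symmetry
   makes the marginal on the coordinates (a, b) independent of the pair a <> b;
   summing over the N(N-1) ordered pairs expresses it through the occupation
   numbers c_i = N lambda_i as the g-mean of (c_i c_j - [i = j] c_i) / (N(N-1)),
   which is the integrand of the statement. *)
From HB Require Import structures.
From mathcomp Require Import all_boot all_order all_algebra all_fingroup.
From mathcomp Require Import reals ring.
Import Order.TTheory GRing.Theory Num.Theory.
Local Open Scope ring_scope.

Lemma perm_pair {T : finType} {a b c d : T} :
  a != b -> c != d -> exists p : {perm T}, p a = c /\ p b = d.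
Proof.
move=> ab cd; pose b' := tperm a c b.
have b'c : b' != c by rewrite -[c in _ != c](tpermL a c) (inj_eq perm_inj) eq_sym.
exists (tperm a c * tperm b' d)%g; rewrite !permM tpermL tpermL.
by split; rewrite // tpermD // eq_sym.
Qed.

Section Types.
Context {N l : nat}.

Definition occ (x : pt N l) (i : 'I_l) : nat := #|[pred j | x j == i]|.

Lemma occ_lt x i : (occ x i < N.+1)%N.
Proof. by rewrite ltnS -[X in (_ <= X)%N](card_ord N) max_card. Qed.

Lemma sum_occ_pred (a : pred nat) (x : pt N l) :
  (\sum_(j < N) a (x j) = \sum_(i < l) a i * occ x i)%N.
Proof.
rewrite (partition_big x xpredT) //=; apply: eq_bigr => i _.
rewrite (eq_bigr (fun _ => a i : nat)) => [|j /eqP-> //].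
by rewrite sum_nat_const mulnC.
Qed.

Definition type_ffun (x : pt N l) : {ffun 'I_l -> 'I_N.+1} :=
  [ffun i => Ordinal (occ_lt x i)].

Lemma sum_type_ffun x : (\sum_i (type_ffun x i : nat))%N == N.
Proof.
under eq_bigr => i _ do rewrite ffunE /=.
apply/eqP; rewrite -[RHS](card_ord N) -sum1_card (sum_occ_pred xpredT x).
by apply: eq_bigr => i _; rewrite mul1n.
Qed.

Definition ptype (x : pt N l) : lamIdx N l := exist _ (type_ffun x) (sum_type_ffun x).

Lemma ptypeE x i : (val (ptype x) i : nat) = occ x i.
Proof. by rewrite ffunE. Qed.

Lemma perm_eq_idxseq_ptype (y : pt N l) :
  perm_eq (idxseq (ptype y)) [seq (y j : nat) | j <- enum 'I_N].
Proof.
apply/seq.permP => a.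
rewrite /idxseq count_flatten -map_comp sumnE big_map big_enum /=.
under eq_bigr => i _ do rewrite /= count_nseq ptypeE.
rewrite count_map -sum1_count big_enum_cond -(sum_occ_pred a y) [RHS]big_mkcond /=.
by apply: eq_bigr => j _; case: (a (y j)).
Qed.

Lemma idxseq_ptype (y : pt N l) :
  exists p : {perm 'I_N}, forall j : 'I_N, nth 0%N (idxseq (ptype y)) j = y (p j).
Proof.
have /tuple_permP[p idxE] : perm_eq (idxseq (ptype y)) [tuple (y j : nat) | j < N].
  by rewrite perm_eq_idxseq_ptype.
by exists p => j; rewrite idxE -[nth _ _ _](tnth_nth 0%N) !tnth_mktuple.
Qed.

End Types.

Section Mixture.
Variable R : realType.
Context {N l : nat}.

Lemma symz_perm {g : pt N l -> R} : (forall x, symz g x = g x) ->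
  forall (p : {perm 'I_N}) (x : pt N l), g [ffun j => x (p j)] = g x.
Proof.
move=> gsym p x; rewrite -gsym -[RHS]gsym /symz [in RHS](reindex_inj (mulIg p)) /=.
congr (_ * _); apply: eq_bigr => s _.
by congr (g _); apply/ffunP => j; rewrite !ffunE permM.
Qed.

Lemma psiN_ptype (y x : pt N l) :
  psiN R (ptype y) x = N`!%:R^-1 * \sum_(s : 'S_N) ([ffun j => x (s j)] == y)%:R.
Proof.
have [p idxE] := idxseq_ptype y.
rewrite /psiN /symz (reindex_inj (mulgI p)) /=; congr (_ * _).
apply: eq_bigr => s _.
rewrite /diracN (_ : [forall j, _] = ([ffun j => x (s j)] == y)); first by case: eqP.
apply/forallP/eqP => [xsy | xsy j]; last by rewrite idxE -xsy !ffunE permM.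
apply/ffunP => j; apply/val_inj; rewrite ffunE /=.
by have /eqP := xsy (p^-1 j)%g; rewrite idxE ffunE permM !permKV.
Qed.

Definition type_mass (g : pt N l -> R) (k : lamIdx N l) : R :=
  \sum_(y | ptype y == k) g y.

Lemma is_prob_type_mass g : is_prob g -> is_prob (type_mass g).
Proof.
case=> g_ge0 g_sum1; split => [k|]; first exact: sumr_ge0.
by rewrite -g_sum1 [RHS](partition_big (@ptype N l) xpredT).
Qed.

Lemma sum_type_mass g (F : lamIdx N l -> R) :
  \sum_k type_mass g k * F k = \sum_y g y * F (ptype y).
Proof.
rewrite [RHS](partition_big (@ptype N l) xpredT) //=.
by apply: eq_bigr => k _; rewrite mulr_suml; apply: eq_bigr => y /eqP->.
Qed.

Lemma sym_mixture g : Psym g -> forall x, g x = \sum_k type_mass g k * psiN R k x.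
Proof.
case=> _ gsym x; rewrite sum_type_mass.
under eq_bigr => y _ do rewrite psiN_ptype mulrCA mulr_sumr.
rewrite -mulr_sumr exchange_big -[LHS]gsym; congr (_ * _).
apply: eq_bigr => s _; rewrite (bigD1 [ffun j => x (s j)]) //= eqxx mulr1.
by rewrite big1 ?addr0 // => y /negbTE; rewrite eq_sym => ->; rewrite mulr0.
Qed.

End Mixture.

Section PairCounts.
Variable R : pzRingType.
Context {N l : nat}.
Variable x : pt N l.

Lemma natr_occ i : (occ x i)%:R = \sum_a ((x a == i)%:R : R).
Proof.
rewrite /occ -sum1_card natr_sum big_mkcond /=.
by apply: eq_bigr => a _; rewrite inE; case: (_ == _).
Qed.

Lemma sum_distinct_pairs_occ i j :
  \sum_a \sum_(b | b != a) (((x a == i) && (x b == j))%:R : R)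
  = (occ x i)%:R * (occ x j)%:R - (i == j)%:R * (occ x i)%:R.
Proof.
have drop_diag a : \sum_(b | b != a) (((x a == i) && (x b == j))%:R : R)
    = \sum_b ((x a == i) && (x b == j))%:R - ((x a == i) && (x a == j))%:R.
  by rewrite [in RHS](bigD1 a) //= addrC addrK.
under eq_bigr => a _ do rewrite drop_diag.
rewrite sumrB !natr_occ mulr_suml mulr_sumr; congr (_ - _).
  by apply: eq_bigr => a _; rewrite mulr_sumr; apply: eq_bigr => b _; rewrite -natrM mulnb.
apply: eq_bigr => a _; have [<-|/negbTE ij] := eqVneq i j; first by rewrite andbb mul1r.
by rewrite mul0r; case: eqP => // ->; rewrite ij.
Qed.

End PairCounts.

Lemma natr_mul_pred_neq0 (R : numDomainType) {N : nat} : (1 < N)%N ->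
  N%:R * (N%:R - 1) != 0 :> R.
Proof.
move=> N_gt1; rewrite mulf_neq0 // ?subr_eq0 ?pnatr_eq0 ?pnatr_eq1 ?gtn_eqF //.
exact: ltnW.
Qed.

Section TwoPointMarginal.
Variable R : realType.
Context {N l : nat}.
Variable g : pt N l -> R.

Definition pair_mass (a b : 'I_N) (i j : 'I_l) : R :=
  \sum_x g x * ((x a == i) && (x b == j))%:R.

Lemma marg2_pair_mass (a b : 'I_N) i j : val a = 0%N -> val b = 1%N ->
  marg2 g i j = pair_mass a b i j.
Proof.
move=> a0 b1; rewrite /marg2 /pair_mass big_mkcond; apply: eq_bigr => x _.
rewrite (_ : [forall k, _] = (x a == i) && (x b == j)); first by rewrite mulr_natr mulrb.
apply/forallP/andP => [xab | [/eqP xa /eqP xb] k].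
  have /andP[/implyP xa _] := xab a; have /andP[_ /implyP xb] := xab b.
  by rewrite xa ?xb ?a0 ?b1.
apply/andP; split; apply/implyP => /eqP k_val; apply/eqP; [rewrite -xa | rewrite -xb];
  by congr (x _); apply: val_inj; rewrite k_val ?a0 ?b1.
Qed.

Hypothesis gsym : forall x, symz g x = g x.

Lemma pair_mass_perm (p : {perm 'I_N}) a b i j :
  pair_mass (p a) (p b) i j = pair_mass a b i j.
Proof.
have perm_pt_inj : injective (fun x : pt N l => [ffun m => x (p m)]).
  move=> x1 x2 /ffunP x12; apply/ffunP => m.
  by have := x12 (p^-1 m)%g; rewrite !ffunE permKV.
rewrite /pair_mass [RHS](reindex_inj perm_pt_inj) /=.
by apply: eq_bigr => x _; rewrite (symz_perm _ gsym) !ffunE.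
Qed.

Lemma pair_mass_distinct a b c d i j : a != b -> c != d ->
  pair_mass a b i j = pair_mass c d i j.
Proof. by move=> ab /(perm_pair ab)[p [<- <-]]; rewrite pair_mass_perm. Qed.

Lemma pair_mass_occ a b i j : a != b ->
  N%:R * (N%:R - 1) * pair_mass a b i j
  = \sum_x g x * ((occ x i)%:R * (occ x j)%:R - (i == j)%:R * (occ x i)%:R).
Proof.
move=> ab; set P := pair_mass a b i j.
have sum_distinct : \sum_c \sum_(d | d != c) pair_mass c d i j = (P *+ N - P) *+ N.
  transitivity (\sum_(c < N) (\sum_(d < N) P - P)).
    apply: eq_bigr => c _; rewrite [in RHS](bigD1 c) //= addrC addrK.
    by apply: eq_bigr => d dc; apply: pair_mass_distinct; rewrite // eq_sym.
  by rewrite !sumr_const card_ord.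
have sum_pair_mass : \sum_c \sum_(d | d != c) pair_mass c d i j
    = \sum_x g x * ((occ x i)%:R * (occ x j)%:R - (i == j)%:R * (occ x i)%:R).
  under eq_bigr => c _ do rewrite exchange_big /=.
  rewrite exchange_big /=; apply: eq_bigr => x _.
  by rewrite -sum_distinct_pairs_occ mulr_sumr; apply: eq_bigr => c _; rewrite mulr_sumr.
rewrite -sum_pair_mass sum_distinct; ring.
Qed.

Lemma marg2_sym i j : (1 < N)%N ->
  marg2 g i j = \sum_x g x * (((occ x i)%:R * (occ x j)%:R - (i == j)%:R * (occ x i)%:R)
                                / (N%:R * (N%:R - 1))).
Proof.
move=> N_gt1; have N1_neq0 := natr_mul_pred_neq0 R N_gt1.
rewrite (marg2_pair_mass (Ordinal (ltnW N_gt1)) (Ordinal N_gt1)) //.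
rewrite -(mulKf N1_neq0 (pair_mass _ _ i j)) pair_mass_occ // mulr_sumr.
by apply: eq_bigr => x _; rewrite mulrCA [_^-1 * _]mulrC.
Qed.

End TwoPointMarginal.

Lemma lam_pair_integrand (R : realType) (N l : nat) (k : lamIdx N l) i j : (1 < N)%N ->
  lam R k i * lam R k j
    + (N%:R - 1)^-1 * (lam R k i * lam R k j - (if i == j then lam R k i else 0))
  = ((val k i : nat)%:R * (val k j : nat)%:R - (i == j)%:R * (val k i : nat)%:R)
      / (N%:R * (N%:R - 1)).
Proof.
move=> /(natr_mul_pred_neq0 R); rewrite mulf_eq0 negb_or => /andP[N_neq0 N1_neq0].
by rewrite /lam; case: eqP => [<-|_] /=; field; rewrite N_neq0 N1_neq0.
Qed.

Theorem lemma4p1 (R : realType) (l N : nat) (hN : (2 <= N)%N) :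
  (forall g : pt N l -> R, Psym g ->
     exists alpha : lamIdx N l -> R, is_prob alpha /\
       forall x : pt N l, g x = \sum_(k : lamIdx N l) alpha k * psiN R k x) /\
  (forall mu : 'I_l * 'I_l -> R, Nrep N mu ->
     exists alpha : lamIdx N l -> R, is_prob alpha /\
       forall i j : 'I_l,
         mu (i, j) = \sum_(k : lamIdx N l) alpha k *
           (lam R k i * lam R k j
            + (N%:R - 1)^-1 * (lam R k i * lam R k j
                               - (if i == j then lam R k i else 0)))).
Proof.
split=> [g g_sym | mu [_ [g [[g_prob g_sym] muE]]]].
  exists (type_mass R g); split; last exact: sym_mixture.
  by apply: is_prob_type_mass; case: g_sym.
exists (type_mass R g); split=> [|i j]; first exact: is_prob_type_mass.
rewrite muE (marg2_sym _ _ g_sym) // sum_type_mass.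
by apply: eq_bigr => x _; rewrite lam_pair_integrand // !ptypeE.
Qed.
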